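(* For every state $x$ and every round $k\ge 0$, \[ \mathbb{E}\big[\Psi_0(X^k)-\Psi_0(X^{k+1}) \,\big|\, X^k=x\big] \;\ge\; \sum_{\{i,j\}\in E} \frac{\left(1-\frac{2}{\alpha}\right)(\ell_i(x)-\ell_j(x))^2}{\alpha\, d_{ij}\left(\frac{1}{s_i}+\frac{1}{s_j}\right)} \;-\; \frac{n}{\alpha}. \]
   Context: $G=(V,E)$ is an undirected graph on $n$ vertices (processors); $\deg(i)$ is the degree and $d_{ij}=\max\{\deg(i),\deg(j)\}$. Processor $i$ has speed $s_i>0$, scaled so the smallest speed is $1$; $s_{\max}=\max_i s_i$, $\mathcal{S}=\sum_i s_i$. There are $m$ unit tasks; in state $x$, $w_i(x)$ is the number of tasks on $i$ and $\ell_i(x)=w_i(x)/s_i$. $\Psi_0(x)=\sum_i (w_i(x)-m s_i/\mathcal{S})^2/s_i$. Protocol with $\alpha=4s_{\max}$: in each round every task, independently, with $i$ its current processor, chooses a uniformly random neighbor $j$; if $\ell_i-\ell_j>1/s_j$ it moves to $j$ with probability $\frac{\deg(i)}{d_{ij}}\cdot\frac{\ell_i-\ell_j}{\alpha(1/s_i+1/s_j)w_i}$, otherwise stays. $X^k$ denotes the state after $k$ rounds. The sum is over undirected edges, each counted once. *)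

From HB Require Import structures.
From mathcomp Require Import all_boot all_order all_algebra.
Set Implicit Arguments. Unset Strict Implicit. Unset Printing Implicit Defensive.
Import Order.TTheory GRing.Theory Num.Theory.
Local Open Scope ring_scope.

(* Processors are 'I_n, the graph is a symmetric irreflexive relation e on 'I_n.
   A configuration assigns each of the m unit tasks to a processor. *)
Definition config (n m : nat) := {ffun 'I_m -> 'I_n}.

Section Defs.
Variables (R : realFieldType) (n m : nat) (e : rel 'I_n) (s : 'I_n -> R).

Definition deg (i : 'I_n) : nat := #|[set j | e i j]|.
Definition dij (i j : 'I_n) : nat := maxn (deg i) (deg j).
Definition smax : R := \big[Num.max/0]_(i < n) s i.
Definition Stot : R := \sum_(i < n) s i.
Definition alpha : R := 4 * smax.

Definition wload (x : config n m) (i : 'I_n) : R := (#|[set t | x t == i]|)%:R.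
Definition load (x : config n m) (i : 'I_n) : R := wload x i / s i.
Definition Psi0 (x : config n m) : R :=
  \sum_(i < n) (wload x i - m%:R * s i / Stot) ^+ 2 / s i.

(* Probability that a task currently on i (in state x) moves to j in one round:
   it picks j uniformly among the deg(i) neighbours, and if
   l_i - l_j > 1/s_j it moves with probability
   deg(i)/d_ij * (l_i - l_j) / (alpha (1/s_i + 1/s_j) w_i). *)
Definition pmove (x : config n m) (i j : 'I_n) : R :=
  if e i j && (load x i - load x j > 1 / s j) then
    (1 / (deg i)%:R) *
    ((deg i)%:R / (dij i j)%:R *
     ((load x i - load x j) / (alpha * (1 / s i + 1 / s j) * wload x i)))
  else 0.

Definition ptask (x : config n m) (i j : 'I_n) : R :=
  if j == i then 1 - \sum_(k < n | k != i) pmove x i k else pmove x i j.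

(* Tasks act independently: probability that the next state is y. *)
Definition pnext (x y : config n m) : R := \prod_(t < m) ptask x (x t) (y t).

(* E[ Psi0(X^k) - Psi0(X^{k+1}) | X^k = x ] *)
Definition exp_drop (x : config n m) : R :=
  \sum_(y : config n m) pnext x y * (Psi0 x - Psi0 y).

End Defs.

From HB Require Import structures.
From mathcomp Require Import all_boot all_order all_algebra.
From mathcomp Require Import ring lra.
Set Implicit Arguments. Unset Strict Implicit. Unset Printing Implicit Defensive.
Import Order.TTheory GRing.Theory Num.Theory.
Local Open Scope ring_scope.

(* Tasks move independently, so the next load of processor i is a sum of
   independent Bernoulli variables: its mean is w_i plus the expected net flow
   into i, and its variance is at most the expected number of tasks entering or
   leaving i. Expanding the quadratic potential, the expected drop is at least the
   drift sum_ij 2 f_ij (l_i - l_j), minus sum_i (net flow into i)^2 / s_i, which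
   Cauchy-Schwarz over the deg(i) neighbours bounds by
   sum_ij f_ij^2 d_ij (1/s_i + 1/s_j), minus the variance term
   sum_ij f_ij (1/s_i + 1/s_j). On an edge where tasks move,
   f_ij = (l_i - l_j) / (alpha d_ij (1/s_i + 1/s_j)); completing the square bounds
   the contribution of each edge from below by the claimed term minus
   2 / (alpha d_ij), and these penalties add up to at most n / alpha. *)

Section ProductExpectation.
Variables (R : comPzRingType) (I J : finType) (p : I -> J -> R).
Hypothesis p_sum1 : forall t, \sum_j p t j = 1.

Definition expect (F : {ffun I -> J} -> R) : R :=
  \sum_(y : {ffun I -> J}) (\prod_t p t (y t)) * F y.

Lemma eq_expect F G : F =1 G -> expect F = expect G.
Proof. by move=> eqFG; apply: eq_bigr => y _; rewrite eqFG. Qed.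

Lemma expectD F G : expect (fun y => F y + G y) = expect F + expect G.
Proof. by rewrite /expect -big_split; apply: eq_bigr => y _; rewrite mulrDr. Qed.

Lemma expectB F G : expect (fun y => F y - G y) = expect F - expect G.
Proof. by rewrite /expect -sumrB; apply: eq_bigr => y _; rewrite mulrBr. Qed.

Lemma expectZ c F : expect (fun y => c * F y) = c * expect F.
Proof. by rewrite /expect mulr_sumr; apply: eq_bigr => y _; rewrite mulrCA. Qed.

Lemma expect_sum (K : finType) (F : K -> {ffun I -> J} -> R) :
  expect (fun y => \sum_k F k y) = \sum_k expect (F k).
Proof. by rewrite /expect exchange_big; apply: eq_bigr => y _; rewrite mulr_sumr. Qed.

Lemma expect_prod (a : I -> J -> R) :
  expect (fun y => \prod_t a t (y t)) = \prod_t \sum_j p t j * a t j.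
Proof. by rewrite /expect bigA_distr_bigA; apply: eq_bigr => y _; rewrite -big_split. Qed.

Lemma expect_cst c : expect (fun=> c) = c.
Proof.
have expect1 : expect (fun=> 1) = 1.
  rewrite (eq_expect (G := fun y => \prod_t (fun _ _ => 1) t (y t))); last first.
    by move=> y; rewrite big1.
  rewrite (expect_prod (fun _ _ => 1)) big1 // => t _.
  by under eq_bigr do rewrite mulr1.
by rewrite -[RHS]mulr1 -expect1 -expectZ; apply: eq_expect => y; rewrite mulr1.
Qed.

Lemma expect_indicator_set (A : {set I}) i :
  expect (fun y => \prod_(t in A) (y t == i)%:R) = \prod_(t in A) p t i.
Proof.
rewrite (eq_expect (G := fun y => \prod_t (if t \in A then (y t == i)%:R else 1)));
  last by move=> y; rewrite big_mkcond.
rewrite (expect_prod (fun t j => if t \in A then (j == i)%:R else 1)) [RHS]big_mkcond.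
apply: eq_bigr => t _; case: ifP => _.
  rewrite (bigD1 i) //= eqxx mulr1 big1 ?addr0 // => j /negbTE->; exact: mulr0.
by under eq_bigr do rewrite mulr1.
Qed.

Definition count_at (y : {ffun I -> J}) (i : J) : R := \sum_t (y t == i)%:R.

Lemma expect_count i : expect (count_at^~ i) = \sum_t p t i.
Proof.
rewrite expect_sum; apply: eq_bigr => t _.
rewrite -(big_set1 *%R t (fun v => p v i)) -expect_indicator_set.
by apply: eq_expect => y; rewrite big_set1.
Qed.

Lemma expect_count_sqr i :
  expect (fun y => count_at y i ^+ 2) = (\sum_t p t i) ^+ 2 + \sum_t (p t i - p t i ^+ 2).
Proof.
rewrite (eq_expect (G := fun y => \sum_t \sum_u (y t == i)%:R * (y u == i)%:R)); last first.
  by move=> y; rewrite expr2 mulr_suml; apply: eq_bigr => t _; rewrite mulr_sumr.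
rewrite expect_sum expr2 mulr_suml -big_split; apply: eq_bigr => t _.
rewrite expect_sum mulr_sumr (bigD1 t) //= [in RHS](bigD1 t) //=.
have -> : expect (fun y => (y t == i)%:R * (y t == i)%:R) = p t i.
  rewrite -(big_set1 *%R t (fun v => p v i)) -expect_indicator_set.
  by apply: eq_expect => y; rewrite big_set1; case: (_ == _); rewrite ?mulr1 ?mulr0.
rewrite (eq_bigr (fun u => p t i * p u i)); first by ring.
move=> u ut; have tu : t \notin [set u] by rewrite inE eq_sym.
rewrite -(big_set1 *%R u (fun v => p v i)) -(@big_setU1 _ _ *%R _ t _ (fun v => p v i) tu).
rewrite -expect_indicator_set; apply: eq_expect => y.
by rewrite big_setU1 // big_set1.
Qed.
End ProductExpectation.

Lemma sum_weighted_net_flow (R : comPzRingType) (I : finType) (f : I -> I -> R) (l : I -> R) :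
  \sum_i l i * (\sum_a f a i - \sum_k f i k) = \sum_i \sum_j f i j * (l j - l i).
Proof.
under eq_bigr do rewrite mulrBr !mulr_sumr.
rewrite sumrB exchange_big -sumrB; apply: eq_bigr => i _.
by rewrite -sumrB; apply: eq_bigr => j _; ring.
Qed.

Lemma sum_weighted_out_in (R : comPzRingType) (I : finType) (f : I -> I -> R) (g : I -> R) :
  \sum_i (\sum_k f i k + \sum_a f a i) * g i = \sum_i \sum_j f i j * (g i + g j).
Proof.
under eq_bigr do rewrite mulrDl !mulr_suml.
rewrite big_split /= [X in _ + X]exchange_big /= -big_split; apply: eq_bigr => i _.
by under [RHS]eq_bigr do rewrite mulrDr; rewrite big_split.
Qed.

Lemma sqr_sum_le_card (R : realFieldType) (I : finType) (A : {pred I}) (g : I -> R) :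
  (\sum_(j in A) g j) ^+ 2 <= #|A|%:R * \sum_(j in A) g j ^+ 2.
Proof.
have -> : #|A|%:R * \sum_(j in A) g j ^+ 2 =
    \sum_(j in A) \sum_(k in A) (g j ^+ 2 + g k ^+ 2) / 2.
  under [RHS]eq_bigr do rewrite -mulr_suml big_split /= sumr_const.
  by rewrite -mulr_suml big_split /= !sumr_const sumrMnl -mulr_natl; field.
rewrite expr2 mulr_suml; apply: ler_sum => j _; rewrite mulr_sumr; apply: ler_sum => k _.
by have := sqr_ge0 (g j - g k); nra.
Qed.

Lemma wload_count (R : realFieldType) n m (y : config n m) i :
  wload R y i = count_at R y i.
Proof.
rewrite /wload -sum1_card natr_sum big_mkcond /=; apply: eq_bigr => t _.
by rewrite inE; case: (_ == _).
Qed.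

Lemma sum_over_tasks (R : realFieldType) n m (x : config n m) (F : 'I_n -> R) :
  \sum_t F (x t) = \sum_a wload R x a * F a.
Proof.
under [RHS]eq_bigr do rewrite wload_count mulr_suml.
rewrite exchange_big /=; apply: eq_bigr => t _.
rewrite (bigD1 (x t)) //= eqxx mul1r big1 ?addr0 // => a.
by rewrite eq_sym => /negbTE->; rewrite mul0r.
Qed.

Lemma expect_Psi0 (R : realFieldType) n m (s : 'I_n -> R) (p : 'I_m -> 'I_n -> R) :
  (forall t, \sum_j p t j = 1) ->
  expect p (Psi0 s) = \sum_i
    ((\sum_t p t i - m%:R * s i / Stot s) ^+ 2 + \sum_t (p t i - p t i ^+ 2)) / s i.
Proof.
move=> p_sum1; pose c i := m%:R * s i / Stot s.
rewrite (eq_expect p (G := fun y => \sum_i ((s i)^-1 * count_at R y i ^+ 2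
  + (-2 * c i / s i) * count_at R y i + c i ^+ 2 / s i))); last first.
  by move=> y; apply: eq_bigr => i _; rewrite wload_count /c; ring.
rewrite expect_sum; apply: eq_bigr => i _.
rewrite !expectD !expectZ expect_cst // expect_count_sqr // expect_count // /c; ring.
Qed.

Lemma ptask_sum1 (R : realFieldType) n m (e : rel 'I_n) (s : 'I_n -> R) (x : config n m) a :
  \sum_j ptask e s x a j = 1.
Proof.
rewrite (bigD1 a) //= /ptask eqxx.
by under eq_bigr => j /negbTE-> do []; rewrite subrK.
Qed.

Lemma sum_edge_pairs (R : nmodType) n (e : rel 'I_n) (h : 'I_n -> 'I_n -> R) :
  symmetric e -> irreflexive e ->
  \sum_i \sum_(j | e i j) h i j = \sum_(i < n) \sum_(j < n | e i j && (i < j)%N) (h i j + h j i).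
Proof.
move=> e_sym e_irr.
under [LHS]eq_bigr => i _ do rewrite (bigID (fun j : 'I_n => (i < j)%N)) /=.
under [RHS]eq_bigr do rewrite big_split /=.
rewrite !big_split /=; congr (_ + _).
under [RHS]eq_bigr do rewrite big_mkcond.
rewrite exchange_big /=; apply: eq_bigr => i _; rewrite big_mkcond; apply: eq_bigr => j _.
rewrite [e j i]e_sym; case: (boolP (e i j)) => //= eij.
have ij : (j : nat) != i by apply: contraTneq eij => /val_inj->; rewrite e_irr.
by rewrite -leqNgt ltn_neqAle ij.
Qed.

Lemma sum_inv_dij_le (R : realFieldType) n (e : rel 'I_n) (a : R) : 0 <= a ->
  \sum_i \sum_(j | e i j) a / (dij e i j)%:R <= n%:R * a.
Proof.
move=> a_ge0; rewrite mulr_natl -[n in a *+ n]card_ord -sumr_const; apply: ler_sum => i _.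
apply: le_trans (_ : \sum_(j | e i j) a / (deg e i)%:R <= _).
  apply: ler_sum => j eij; apply: (ler_wpM2l a_ge0).
  have deg_gt0 : (0 < deg e i)%N by apply/card_gt0P; exists j; rewrite inE.
  by rewrite lef_pV2 ?posrE ?ltr0n ?ler_nat ?leq_maxl // (leq_trans deg_gt0) ?leq_maxl.
rewrite (eq_bigl (fun j => j \in [set j | e i j])) => [|j]; last by rewrite inE.
rewrite sumr_const -/(deg e i); have [->|deg_gt0] := posnP (deg e i); first by rewrite mulr0n.
by rewrite -mulrnAr -(mulr_natr (_^-1)) mulVf ?mulr1 // pnatr_eq0 -lt0n.
Qed.

Lemma le_alpha (R : realFieldType) n (s : 'I_n -> R) i : 4 * s i <= alpha s.
Proof. by rewrite ler_pM2l ?ltr0n //; apply: le_bigmax. Qed.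

(* Lower bound for the expected drop contributed by a flow [f] along an edge with
   load difference [D]: drift, minus its share of the squared net flows (after
   Cauchy-Schwarz), minus the Bernoulli variance of the moving tasks. *)
Definition edge_gain (R : pzRingType) (f D d u : R) := 2 * f * D - f ^+ 2 * (d * u) - f * u.

Lemma edge_gain0 (R : pzRingType) (D d u : R) : edge_gain 0 D d u = 0.
Proof. by rewrite /edge_gain !(mul0r, mulr0, expr0n, subr0). Qed.

Lemma edge_gain_active_ge (R : realFieldType) (al d u D : R) :
  4 <= al -> 1 <= d -> 0 < u -> u <= 2 ->
  (1 - 2 / al) * D ^+ 2 / (al * d * u) - 2 / (al * d) <= edge_gain (D / (al * d * u)) D d u.
Proof.
move=> al_ge4 d_ge1 u_gt0 u_le2.
have al_neq0 : al != 0 by rewrite gt_eqF //; lra.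
have d_neq0 : d != 0 by rewrite gt_eqF //; lra.
rewrite -subr_ge0.
(* completing the square in [D] *)
have -> : edge_gain (D / (al * d * u)) D d u - ((1 - 2 / al) * D ^+ 2 / (al * d * u) - 2 / (al * d))
    = ((D - u / 2) ^+ 2 / u + D ^+ 2 / (al * u) + (2 - u / 4)) / (al * d).
  by rewrite /edge_gain; field; rewrite al_neq0 d_neq0 gt_eqF.
have sq1 : 0 <= (D - u / 2) ^+ 2 / u by rewrite divr_ge0 ?sqr_ge0 ?ltW.
have sq2 : 0 <= D ^+ 2 / (al * u) by rewrite divr_ge0 ?sqr_ge0 // mulr_ge0 //; lra.
by apply: divr_ge0; [lra | apply: mulr_ge0; lra].
Qed.

Lemma idle_edge_le (R : realFieldType) (al d a b D : R) :
  4 <= al -> 1 <= d -> 0 < a <= 1 -> 0 < b <= 1 -> - a <= D <= b ->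
  (1 - 2 / al) * D ^+ 2 / (al * d * (a + b)) <= 2 / (al * d).
Proof.
move=> al_ge4 d_ge1 /andP[a_gt0 a_le1] /andP[b_gt0 b_le1] /andP[aD Db].
have ald_gt0 : 0 < al * d by apply: mulr_gt0; lra.
have ab_gt0 : 0 < a + b by lra.
have k_ge0 : 0 <= 1 - 2 / al by rewrite subr_ge0 ler_pdivrMr; lra.
have k_le1 : 1 - 2 / al <= 1 by rewrite lerBlDr lerDl divr_ge0 //; lra.
have q_le1 : D ^+ 2 / (a + b) <= 1 by rewrite ler_pdivrMr ?expr2; nra.
rewrite [leLHS](_ : _ = (1 - 2 / al) * (D ^+ 2 / (a + b)) / (al * d)); last first.
  by field; rewrite !gt_eqF //; lra.
rewrite ler_pM2r ?invr_gt0 //.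
have : 0 <= D ^+ 2 / (a + b) by rewrite divr_ge0 ?sqr_ge0 ?ltW.
nra.
Qed.

Section Protocol.
Variables (R : realFieldType) (n m : nat) (e : rel 'I_n) (s : 'I_n -> R) (x : config n m).
Hypotheses (e_sym : symmetric e) (e_irr : irreflexive e).
Hypotheses (s_gt0 : forall i, 0 < s i) (alpha_gt0 : 0 < alpha s).

Definition flow a k := wload R x a * pmove e s x a k.
Definition outflow i := \sum_k flow i k.
Definition inflow i := \sum_a flow a i.

Lemma flow_id i : flow i i = 0.
Proof. by rewrite /flow /pmove e_irr mulr0. Qed.

Lemma inflowE i : inflow i = \sum_(a | a != i) wload R x a * pmove e s x a i.
Proof. by rewrite /inflow (bigD1 i) //= flow_id add0r. Qed.

Lemma outflowE i : outflow i = wload R x i * \sum_(k | k != i) pmove e s x i k.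
Proof. by rewrite /outflow (bigD1 i) //= flow_id add0r mulr_sumr. Qed.

Lemma expected_wload i :
  \sum_t ptask e s x (x t) i = wload R x i - outflow i + inflow i.
Proof.
rewrite (sum_over_tasks x (fun a => ptask e s x a i)) (bigD1 i) //= /ptask eqxx.
rewrite inflowE outflowE mulrBr mulr1.
by congr (_ + _); apply: eq_bigr => a; rewrite eq_sym => /negbTE->.
Qed.

Lemma wload_variance_le i :
  \sum_t (ptask e s x (x t) i - ptask e s x (x t) i ^+ 2) <= outflow i + inflow i.
Proof.
rewrite (sum_over_tasks x (fun a => ptask e s x a i - ptask e s x a i ^+ 2)).
rewrite (bigD1 i) //= /ptask eqxx.
rewrite inflowE outflowE.
have w_ge0 a : 0 <= wload R x a by rewrite ler0n.
apply: lerD.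
  apply: ler_wpM2l => //; set q := \sum_(k | k != i) _.
  by have := sqr_ge0 q; lra.
apply: ler_sum => a; rewrite eq_sym => /negbTE->; apply: ler_wpM2l => //.
by have := sqr_ge0 (pmove e s x a i); lra.
Qed.

Lemma flow_eq0 a k : ~~ e a k -> flow a k = 0.
Proof. by rewrite /flow /pmove => /negbTE->; rewrite mulr0. Qed.

Lemma flowE a k : flow a k =
  if e a k && (1 / s k < load s x a - load s x k)
  then (load s x a - load s x k) / (alpha s * (dij e a k)%:R * (1 / s a + 1 / s k)) else 0.
Proof.
rewrite /flow /pmove; case: ifP => [/andP[eak lt_load]|_]; last exact: mulr0.
have sa := s_gt0 a; have sk := s_gt0 k.
have w_neq0 : wload R x a != 0.
  apply: contraTneq lt_load => w0; rewrite {1}/load w0 mul0r -leNgt.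
  have : 0 <= load s x k by rewrite divr_ge0 ?ler0n ?ltW.
  have : 0 < 1 / s k by rewrite divr_gt0.
  lra.
have deg_gt0 : (0 < deg e a)%N by apply/card_gt0P; exists k; rewrite inE.
have dij_gt0 : (0 < dij e a k)%N by rewrite (leq_trans deg_gt0) ?leq_maxl.
field; rewrite w_neq0 !pnatr_eq0 -!lt0n deg_gt0 dij_gt0 !gt_eqF //.
by rewrite addr_gt0.
Qed.

Lemma flow_ge0 a k : 0 <= flow a k.
Proof.
rewrite flowE; case: ifP => // /andP[_ lt_load].
have sa := s_gt0 a; have sk := s_gt0 k.
have D_gt0 : 0 < load s x a - load s x k by apply: lt_trans lt_load; rewrite divr_gt0.
have u_gt0 : 0 < 1 / s a + 1 / s k by rewrite addr_gt0 ?divr_gt0.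
apply: divr_ge0 (ltW D_gt0) _; apply: mulr_ge0 (ltW u_gt0).
exact: mulr_ge0 (ltW alpha_gt0) (ler0n _ _).
Qed.

Lemma net_flow_sqr_le i :
  (inflow i - outflow i) ^+ 2 <= (deg e i)%:R * \sum_j (flow j i ^+ 2 + flow i j ^+ 2).
Proof.
pose A := [set j | e i j].
have off_A (F : R -> R -> R) :
    (forall j, ~~ e i j -> F (flow j i) (flow i j) = 0) ->
    \sum_j F (flow j i) (flow i j) = \sum_(j in A) F (flow j i) (flow i j).
  move=> F0; rewrite [LHS](bigID (mem A)) /= [X in _ + X]big1 ?addr0 // => j.
  by rewrite inE; apply: F0.
have flow_off j : ~~ e i j -> flow j i = 0 /\ flow i j = 0.
  by move=> nij; rewrite !flow_eq0 // e_sym.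
rewrite /inflow /outflow -sumrB.
rewrite (off_A (fun u v => u - v)) => [|j /flow_off[-> ->]]; last exact: subr0.
rewrite (off_A (fun u v => u ^+ 2 + v ^+ 2)) => [|j /flow_off[-> ->]]; last by rewrite expr0n addr0.
apply: le_trans (sqr_sum_le_card _ _) _; rewrite /deg -/A.
apply: ler_wpM2l; first exact: ler0n.
apply: ler_sum => j _; have := flow_ge0 j i; have := flow_ge0 i j; nra.
Qed.

Lemma sum_net_flow_sqr_le :
  \sum_i (inflow i - outflow i) ^+ 2 / s i <=
  \sum_i \sum_j flow i j ^+ 2 * ((dij e i j)%:R * (1 / s i + 1 / s j)).
Proof.
pose c i := (deg e i)%:R / s i.
apply: le_trans (_ : \sum_i (\sum_k flow i k ^+ 2 + \sum_a flow a i ^+ 2) * c i <= _).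
  apply: ler_sum => i _; rewrite -big_split /= [leRHS]mulrC /c [leRHS]mulrAC.
  apply: ler_wpM2r; first by rewrite invr_ge0 ltW.
  by under eq_bigr do rewrite addrC; exact: net_flow_sqr_le.
rewrite [leLHS](sum_weighted_out_in (fun i j => flow i j ^+ 2) c).
apply: ler_sum => i _; apply: ler_sum => j _.
apply: ler_wpM2l; first exact: sqr_ge0.
rewrite mulrDr /c !mulrA !mulr1.
have s_inv_ge0 k : 0 <= (s k)^-1 by rewrite invr_ge0 ltW.
by apply: lerD; apply: ler_wpM2r; rewrite // ler_nat ?leq_maxl ?leq_maxr.
Qed.

Lemma exp_dropE :
  exp_drop e s x = Psi0 s x - \sum_i ((\sum_t ptask e s x (x t) i - m%:R * s i / Stot s) ^+ 2
    + \sum_t (ptask e s x (x t) i - ptask e s x (x t) i ^+ 2)) / s i.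
Proof.
have p_sum1 t : \sum_j ptask e s x (x t) j = 1 by exact: ptask_sum1.
change (exp_drop e s x) with (expect (fun t => ptask e s x (x t)) (fun y => Psi0 s x - Psi0 s y)).
by rewrite expectB expect_cst // expect_Psi0.
Qed.

Lemma exp_drop_ge_net_flow :
  \sum_i (2 * (m%:R / Stot s - load s x i) * (inflow i - outflow i)
    - (inflow i - outflow i) ^+ 2 / s i - (outflow i + inflow i) / s i) <= exp_drop e s x.
Proof.
rewrite exp_dropE /Psi0 -sumrB; apply: ler_sum => i _.
rewrite expected_wload; have := wload_variance_le i.
set V := \sum_t _; set w := wload R x i; set o := outflow i; set a := inflow i.
rewrite [m%:R * s i / _]mulrAC; set K := m%:R / Stot s.
have si_neq0 : s i != 0 by rewrite gt_eqF.
move=> V_le; rewrite -subr_ge0 /load -/w.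
rewrite [X in 0 <= X](_ : _ = (o + a - V) / s i); last by field.
by rewrite divr_ge0 ?subr_ge0 // ltW.
Qed.

Lemma drop_ge_edge_gain :
  \sum_i \sum_j edge_gain (flow i j) (load s x i - load s x j) (dij e i j)%:R (1 / s i + 1 / s j)
  <= exp_drop e s x.
Proof.
apply: le_trans _ exp_drop_ge_net_flow; rewrite !sumrB.
have drift : \sum_i 2 * (m%:R / Stot s - load s x i) * (inflow i - outflow i) =
    \sum_i \sum_j 2 * flow i j * (load s x i - load s x j).
  rewrite (eq_bigr _ (fun i _ => esym (mulrA _ _ _))) -mulr_sumr.
  rewrite (sum_weighted_net_flow flow (fun i => m%:R / Stot s - load s x i)) mulr_sumr.
  by apply: eq_bigr => i _; rewrite mulr_sumr; apply: eq_bigr => j _; ring.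
have moves : \sum_i (outflow i + inflow i) / s i = \sum_i \sum_j flow i j * (1 / s i + 1 / s j).
  rewrite -(sum_weighted_out_in flow (fun i => 1 / s i)).
  by apply: eq_bigr => i _; rewrite mul1r.
rewrite drift moves /edge_gain.
under [leLHS]eq_bigr do rewrite !sumrB.
by have := sum_net_flow_sqr_le; rewrite !sumrB; lra.
Qed.

Lemma edge_gain_pair_ge i j : (forall k, 1 <= s k) -> 4 <= alpha s -> e i j ->
  (1 - 2 / alpha s) * (load s x i - load s x j) ^+ 2 /
    (alpha s * (dij e i j)%:R * (1 / s i + 1 / s j)) - 2 / (alpha s * (dij e i j)%:R)
  <= edge_gain (flow i j) (load s x i - load s x j) (dij e i j)%:R (1 / s i + 1 / s j)
   + edge_gain (flow j i) (load s x j - load s x i) (dij e i j)%:R (1 / s j + 1 / s i).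
Proof.
move=> s_ge1 al_ge4 eij.
have eji : e j i by rewrite e_sym.
have d_ge1 : 1 <= (dij e i j)%:R :> R.
  by rewrite ler1n (leq_trans _ (leq_maxl _ _)) //; apply/card_gt0P; exists j; rewrite inE.
have si : 0 < 1 / s i <= 1 by rewrite divr_gt0 ?ler_pdivrMr ?s_gt0 // mul1r s_ge1.
have sj : 0 < 1 / s j <= 1 by rewrite divr_gt0 ?ler_pdivrMr ?s_gt0 // mul1r s_ge1.
have dC : dij e j i = dij e i j by rewrite /dij maxnC.
move: si sj; rewrite !flowE eij eji /= dC (addrC (1 / s j)).
set a := 1 / s i; set b := 1 / s j; move=> /andP[a_gt0 a_le1] /andP[b_gt0 b_le1].
case: ifP => [act_ij | /negbT idle_ij].
  by rewrite ifF ?edge_gain0 ?addr0; [apply: edge_gain_active_ge | apply/negbTE]; lra.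
case: ifP => [act_ji | /negbT idle_ji].
  by rewrite edge_gain0 add0r -sqrrN opprB; apply: edge_gain_active_ge; lra.
rewrite !edge_gain0 addr0 subr_le0; apply: idle_edge_le; rewrite ?a_gt0 ?b_gt0 //.
by move: idle_ij idle_ji; rewrite -!leNgt => ij ji; apply/andP; split; lra.
Qed.

End Protocol.

Theorem lemma12 (R : realFieldType) (n m : nat) (e : rel 'I_n) (s : 'I_n -> R) :
  symmetric e -> irreflexive e ->
  (forall i, 1 <= s i) -> (exists i, s i = 1) ->
  forall x : config n m,
    \sum_(i < n) \sum_(j < n | e i j && (i < j)%N)
        ((1 - 2 / alpha s) * (load s x i - load s x j) ^+ 2 /
         (alpha s * (dij e i j)%:R * (1 / s i + 1 / s j)))
      - n%:R / alpha s
    <= exp_drop e s x.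
Proof.
move=> e_sym e_irr s_ge1 [i0 s_i0] x.
have s_gt0 i : 0 < s i by apply: lt_le_trans (s_ge1 i).
have alpha_ge4 : 4 <= alpha s by have := le_alpha s i0; rewrite s_i0 mulr1.
have alpha_gt0 : 0 < alpha s by apply: lt_le_trans alpha_ge4.
apply: le_trans _ (drop_ge_edge_gain x e_sym e_irr s_gt0 alpha_gt0).
rewrite [leRHS](eq_bigr (fun i => \sum_(j | e i j) edge_gain (flow e s x i j)
    (load s x i - load s x j) (dij e i j)%:R (1 / s i + 1 / s j))); last first.
  move=> i _; rewrite [RHS]big_mkcond; apply: eq_bigr => j _.
  by case: ifP => // /negbT /(flow_eq0 s x)->; rewrite edge_gain0.
rewrite [leRHS](sum_edge_pairs _ e_sym e_irr).
have alpha_inv_ge0 : 0 <= (alpha s)^-1 by rewrite invr_ge0 ltW.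
have pen_le := sum_inv_dij_le e alpha_inv_ge0.
rewrite (sum_edge_pairs _ e_sym e_irr) in pen_le.
apply: le_trans (lerB (lexx _) pen_le) _; rewrite -sumrB; apply: ler_sum => i _.
rewrite -sumrB; apply: ler_sum => j /andP[eij _].
have -> : dij e j i = dij e i j by rewrite /dij maxnC.
rewrite [X in _ - X](_ : _ = 2 / (alpha s * (dij e i j)%:R)); last by rewrite [in RHS]invfM; ring.
exact: edge_gain_pair_ge.
Qed.
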